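(* For every integer $n\ge1$, $$\sum_{\substack{1\le k\le n\\ \gcd(k,n)\text{ a square}}}k=\frac{n(\beta(n)+\chi(n))}{2},\qquad \prod_{\substack{1\le k\le n\\ \gcd(k,n)\text{ a square}}}k=n^{\beta(n)}\prod_{d\mid n}\left(\frac{d!}{d^d}\right)^{\lambda(n/d)}.$$
   Context: $\chi$ is the characteristic function of the set of perfect squares (with $1$ a square). $\lambda$ is the Liouville function, $\beta(n)=\sum_{d\mid n}d\,\lambda(n/d)$. *)

From HB Require Import structures.
From mathcomp Require Import all_boot all_order all_algebra.
Set Implicit Arguments. Unset Strict Implicit. Unset Printing Implicit Defensive.
Import Order.TTheory GRing.Theory Num.Theory.

Definition is_square (m : nat) : bool := [exists i : 'I_m.+1, (i * i == m)%N].
Definition chi (n : nat) : int := if is_square n then 1%R else 0%R.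

Definition bigOmega (n : nat) : nat := \sum_(p <- primes n) logn p n.

Definition liouville (n : nat) : int := ((-1) ^+ bigOmega n)%R.

Definition beta (n : nat) : int :=
  (\sum_(d <- divisors n) (d%:Z * liouville (n %/ d)))%R.

From HB Require Import structures.
From mathcomp Require Import all_boot all_order all_algebra.
From mathcomp Require Import ring.
Import Order.TTheory GRing.Theory Num.Theory.

(* The proof rests on the identity  sum_(c | m) lambda(c) = chi(m),  i.e.
   lambda * 1 = chi in the Dirichlet convolution sense.  We prove it by strong
   induction on m, peeling off the smallest prime factor p of m: divisors of
   p*m split into p * (divisors of m) and the divisors of m prime to p, which
   gives, for  L(m) := sum_(c | m) lambda(c),  that  L(p*m) = 0  when p does
   not divide m and  L(p*p*m) = L(m).
   Applied to m = gcd(k, n), the identity turns the condition "gcd(k, n) is a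
   square" into the weight  sum_(c | n, c | k) lambda(c).  Exchanging the order
   of summation (resp. multiplication), the sum and product over 1 <= k <= n
   become sums and products, over the divisors c of n, of sums and products
   over the multiples c*j, 1 <= j <= n/c, of c.  These are computed in closed
   form (Gauss' sum  M(M+1)/2  and  c^M * M!), and regrouping with the
   divisor flip  c |-> n/c  yields beta(n) = sum_(c | n) (n/c) lambda(c). *)

Lemma is_squareP m : reflect (exists i, i * i = m) (is_square m).
Proof.
apply: (iffP existsP) => [[i /eqP sq_i]|[i sq_i]]; first by exists i.
have lt_i_m : i < m.+1.
  case: i sq_i => [|i] sq_i; first by rewrite -sq_i.
  by rewrite ltnS -sq_i leq_pmulr.
by exists (Ordinal lt_i_m); rewrite /= sq_i.
Qed.

Lemma prime_dvd_sqrt p i : prime p -> p %| i * i -> p %| i.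
Proof. by move=> pr_p; rewrite Euclid_dvdM // orbb. Qed.

Lemma is_square_ppM p k : prime p -> is_square (p * p * k) = is_square k.
Proof.
move=> pr_p; have p_gt0 := prime_gt0 pr_p.
apply/is_squareP/is_squareP => [[i sq_i]|[j <-]]; last by exists (p * j); ring.
have /dvdnP[j def_i] : p %| i.
  by apply: prime_dvd_sqrt; rewrite // sq_i -mulnA dvdn_mulr.
exists j; apply/eqP; rewrite -(@eqn_pmul2l (p * p)) ?muln_gt0 ?p_gt0 // -sq_i def_i.
by apply/eqP; ring.
Qed.

Lemma not_square_pM p k : prime p -> ~~ (p %| k) -> ~~ is_square (p * k).
Proof.
move=> pr_p p_ndvd_k; apply/is_squareP => -[i sq_i].
have /dvdnP[j def_i] : p %| i by apply: prime_dvd_sqrt; rewrite // sq_i dvdn_mulr.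
suff def_k : k = j * j * p by rewrite def_k dvdn_mull in p_ndvd_k.
apply/eqP; rewrite -(eqn_pmul2l (prime_gt0 pr_p)) -sq_i def_i; apply/eqP; ring.
Qed.

Lemma bigOmegaE n N : 0 < n -> n < N -> bigOmega n = \sum_(0 <= q < N) logn q n.
Proof.
move=> n_gt0 lt_n_N.
rewrite (bigID (mem (primes n))) /= [X in _ + X]big1 ?addn0; last first.
  by move=> q /negbTE q_np; apply/eqP; rewrite eqn0Ngt logn_gt0 q_np.
rewrite -big_filter; apply: perm_big; apply: uniq_perm.
- exact: primes_uniq.
- by rewrite filter_uniq // iota_uniq.
move=> q; rewrite mem_filter mem_index_iota.
have [|//] := boolP (q \in primes n); rewrite mem_primes => /and3P[_ _ q_dvd_n].
by rewrite (leq_ltn_trans (dvdn_leq n_gt0 q_dvd_n)).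
Qed.

Lemma bigOmegaM m k : 0 < m -> 0 < k -> bigOmega (m * k) = bigOmega m + bigOmega k.
Proof.
move=> m_gt0 k_gt0; have mk_gt0 : 0 < m * k by rewrite muln_gt0 m_gt0.
rewrite !(@bigOmegaE _ (m * k).+1) ?ltnS ?leq_pmulr ?leq_pmull // -big_split.
by apply: eq_bigr => q _; apply: lognM.
Qed.

Lemma liouvilleM m k :
  0 < m -> 0 < k -> liouville (m * k) = (liouville m * liouville k)%R.
Proof. by move=> m_gt0 k_gt0; rewrite /liouville bigOmegaM // exprD. Qed.

Lemma liouville_prime p : prime p -> liouville p = (-1)%R.
Proof.
by move=> pr_p; rewrite /liouville /bigOmega primes_prime // big_seq1 logn_prime ?eqxx.
Qed.

Lemma liouville1 : liouville 1 = 1%R.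
Proof. by rewrite /liouville /bigOmega big_nil. Qed.

Lemma divnK_divisor {n d : nat} : 0 < n -> d %| n -> n %/ (n %/ d) = d.
Proof. by move=> n_gt0 d_dvd_n; rewrite divnA // mulKn. Qed.

Section DivisorReindexing.
Variables (R : Type) (idx : R) (op : Monoid.com_law idx).

Lemma big_divisors_dvd p m (F : nat -> R) : prime p -> 0 < m -> p %| m ->
  \big[op/idx]_(c <- divisors m | p %| c) F c =
  \big[op/idx]_(c <- divisors (m %/ p)) F (p * c).
Proof.
move=> pr_p m_gt0 p_dvd_m; have p_gt0 := prime_gt0 pr_p.
have mp_gt0 : 0 < m %/ p by rewrite divn_gt0 // dvdn_leq.
rewrite -big_filter -(big_map (muln p) xpredT); apply: perm_big.
apply: uniq_perm; rewrite ?filter_uniq ?divisors_uniq //.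
  by rewrite map_inj_uniq ?divisors_uniq // => x y /eqP; rewrite eqn_pmul2l // => /eqP.
move=> x; rewrite mem_filter -dvdn_divisors //.
apply/andP/mapP => [[/dvdnP[j ->] j_dvd]|[y y_dvd ->]].
  by exists j; rewrite 1?mulnC // -dvdn_divisors // dvdn_divRL // mulnC.
move: y_dvd; rewrite -dvdn_divisors // dvdn_divRL // => y_dvd.
by rewrite dvdn_mulr // mulnC.
Qed.

Lemma big_divisors_pM_coprime p m (F : nat -> R) : prime p -> 0 < m ->
  \big[op/idx]_(c <- divisors (p * m) | ~~ (p %| c)) F c =
  \big[op/idx]_(c <- divisors m | ~~ (p %| c)) F c.
Proof.
move=> pr_p m_gt0; have pm_gt0 : 0 < p * m by rewrite muln_gt0 prime_gt0.
rewrite -[LHS]big_filter -[RHS]big_filter; apply: perm_big.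
apply: uniq_perm; rewrite ?filter_uniq ?divisors_uniq // => x.
rewrite !mem_filter -!dvdn_divisors //; case: (boolP (p %| x)) => //= p_ndvd_x.
by rewrite Gauss_dvdr // coprime_sym prime_coprime.
Qed.

Lemma big_divisors_flip n (F : nat -> R) : 0 < n ->
  \big[op/idx]_(d <- divisors n) F d = \big[op/idx]_(c <- divisors n) F (n %/ c).
Proof.
move=> n_gt0; rewrite -(big_map (divn n) xpredT); apply: perm_big.
apply: uniq_perm; rewrite ?divisors_uniq //.
  rewrite map_inj_in_uniq ?divisors_uniq // => x y.
  rewrite -!dvdn_divisors // => x_dvd y_dvd eq_xy.
  by rewrite -(divnK_divisor n_gt0 x_dvd) eq_xy divnK_divisor.
move=> x; rewrite -dvdn_divisors //; apply/idP/mapP => [x_dvd|[y y_dvd ->]].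
  by exists (n %/ x); rewrite ?divnK_divisor // -dvdn_divisors // dvdn_div.
by rewrite dvdn_div // dvdn_divisors.
Qed.

Lemma big_divisors_gcd n k (F : nat -> R) : 0 < n ->
  \big[op/idx]_(c <- divisors (gcdn k n)) F c =
  \big[op/idx]_(c <- divisors n | c %| k) F c.
Proof.
move=> n_gt0; have g_gt0 : 0 < gcdn k n by rewrite gcdn_gt0 n_gt0 orbT.
rewrite -[RHS]big_filter; apply: perm_big.
apply: uniq_perm; rewrite ?filter_uniq ?divisors_uniq // => x.
by rewrite mem_filter -!dvdn_divisors // dvdn_gcd andbC.
Qed.

End DivisorReindexing.

Local Open Scope ring_scope.

Definition liouville_divsum (m : nat) : int := \sum_(c <- divisors m) liouville c.

Lemma liouville_divsum_pM p m : prime p -> (0 < m)%N ->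
  liouville_divsum (p * m) =
  \sum_(c <- divisors m | ~~ (p %| c)%N) liouville c - liouville_divsum m.
Proof.
move=> pr_p m_gt0; have p_gt0 := prime_gt0 pr_p.
rewrite /liouville_divsum (bigID (dvdn p)) /= addrC big_divisors_pM_coprime //.
rewrite big_divisors_dvd ?muln_gt0 ?p_gt0 ?dvdn_mulr // mulKn //.
rewrite -sumrN; congr (_ + _); apply: eq_big_seq => c.
rewrite -dvdn_divisors // => /(dvdn_gt0 m_gt0) c_gt0.
by rewrite liouvilleM // liouville_prime // mulN1r.
Qed.

Lemma liouville_divsum_pM_ndvd p m : prime p -> (0 < m)%N -> ~~ (p %| m)%N ->
  liouville_divsum (p * m) = 0.
Proof.
move=> pr_p m_gt0 p_ndvd_m; rewrite liouville_divsum_pM //.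
suff -> : \sum_(c <- divisors m | ~~ (p %| c)%N) liouville c = liouville_divsum m.
  by rewrite subrr.
rewrite /liouville_divsum big_seq_cond [RHS]big_seq; apply: eq_bigl => c.
case: (boolP (c \in divisors m)) => //=; rewrite -dvdn_divisors // => c_dvd_m.
by apply: contraNN p_ndvd_m => /dvdn_trans; apply.
Qed.

Lemma liouville_divsum_ppM p m : prime p -> (0 < m)%N ->
  liouville_divsum (p * p * m) = liouville_divsum m.
Proof.
move=> pr_p m_gt0; have pm_gt0 : (0 < p * m)%N by rewrite muln_gt0 prime_gt0.
rewrite -mulnA !liouville_divsum_pM // big_divisors_pM_coprime //.
by rewrite opprB addrC subrK.
Qed.

Lemma liouville_divsum_chi m : (0 < m)%N -> liouville_divsum m = chi m.
Proof.
elim/ltn_ind: m => m IH m_gt0.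
have [m_gt1|m_le1] := ltnP 1 m; last first.
  have -> : m = 1%N by apply/anti_leq/andP.
  rewrite /liouville_divsum /chi big_seq1 liouville1.
  by case: is_squareP => // -[]; exists 1%N.
have pr_p := pdiv_prime m_gt1; set p := pdiv m in pr_p *.
have p_gt0 := prime_gt0 pr_p.
have def_m : m = (p * (m %/ p))%N by rewrite mulnC divnK ?pdiv_dvd.
have mp_gt0 : (0 < m %/ p)%N by rewrite divn_gt0 // dvdn_leq ?pdiv_dvd.
have [p_dvd|p_ndvd] := boolP (p %| m %/ p)%N; last first.
  rewrite def_m liouville_divsum_pM_ndvd // /chi.
  by rewrite (negbTE (not_square_pM _ _ pr_p p_ndvd)).
have def_m2 : m = (p * p * (m %/ p %/ p))%N.
  by rewrite -mulnA [(p * (_ %/ p))%N]mulnC divnK // -def_m.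
have mpp_gt0 : (0 < m %/ p %/ p)%N by rewrite divn_gt0 // dvdn_leq.
rewrite def_m2 liouville_divsum_ppM // IH // /chi ?is_square_ppM //.
by rewrite (leq_ltn_trans (leq_div _ p)) // ltn_Pdiv // prime_gt1.
Qed.

Lemma square_gcd_weight n k : (0 < n)%N ->
  \sum_(c <- divisors n | (c %| k)%N) liouville c = chi (gcdn k n).
Proof.
move=> n_gt0; rewrite -big_divisors_gcd // -/(liouville_divsum _).
by rewrite liouville_divsum_chi // gcdn_gt0 n_gt0 orbT.
Qed.

Lemma big_multiples (R : Type) (idx : R) (op : Monoid.law idx) c n (F : nat -> R) :
  (0 < c)%N -> (c %| n)%N ->
  \big[op/idx]_(1 <= k < n.+1 | (c %| k)%N) F k =
  \big[op/idx]_(1 <= j < (n %/ c).+1) F (c * j)%N.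
Proof.
move=> c_gt0 /dvdnP[M ->]; rewrite mulnK //.
elim: M => [|M IH]; first by rewrite !big_geq.
rewrite big_nat_recr //= -IH mulSn addnC.
rewrite (@big_cat_nat _ _ _ (M * c).+1) //=; last by rewrite ltnS leq_addr.
congr (op _ _); rewrite big_mkcond big_nat_recr /=; last first.
  by rewrite -{1}[(M * c)%N]addn0 ltn_add2l.
rewrite dvdn_addr ?dvdn_mull // dvdnn mulnSr [(c * M)%N]mulnC.
rewrite big_nat_cond big1 ?Monoid.mul1m // => k /andP[/andP[lo hi] _].
case: ifP => // /dvdnP[j def_k]; move: lo hi; rewrite def_k.
by rewrite -mulSnr !ltn_pmul2r // ltnS => lt_M_j; rewrite leqNgt lt_M_j.
Qed.

Lemma sum_square_gcd_expand (R : pzRingType) n (F : nat -> R) : (0 < n)%N ->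
  \sum_(1 <= k < n.+1 | is_square (gcdn k n)) F k =
  \sum_(c <- divisors n) (liouville c)%:~R * \sum_(1 <= j < (n %/ c).+1) F (c * j)%N.
Proof.
move=> n_gt0; rewrite big_mkcond /=.
transitivity (\sum_(1 <= k < n.+1) \sum_(c <- divisors n)
    (if (c %| k)%N then (liouville c)%:~R * F k else 0)).
  apply: eq_big_nat => k _; rewrite -big_mkcond /= -mulr_suml -rmorph_sum /=.
  by rewrite square_gcd_weight // /chi; case: ifP => _; rewrite ?mul1r ?mul0r.
rewrite exchange_big; apply: eq_big_seq => c; rewrite -dvdn_divisors // => c_dvd_n.
by rewrite -big_mkcond -mulr_sumr big_multiples // (dvdn_gt0 n_gt0 c_dvd_n).
Qed.

Lemma prod_exprz (R : fieldType) (x : R) (I : Type) (r : seq I) (P : pred I)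
    (e : I -> int) :
  x != 0 -> \prod_(i <- r | P i) x ^ e i = x ^ (\sum_(i <- r | P i) e i).
Proof.
move=> x_neq0; elim: r => [|a r IH]; first by rewrite !big_nil expr0z.
by rewrite !big_cons; case: (P a); rewrite ?IH ?expfzDr.
Qed.

Lemma exprz_prod (R : fieldType) (I : Type) (r : seq I) (P : pred I) (F : I -> R)
    (e : int) :
  (\prod_(i <- r | P i) F i) ^ e = \prod_(i <- r | P i) F i ^ e.
Proof.
elim: r => [|a r IH]; first by rewrite !big_nil exp1rz.
by rewrite !big_cons; case: (P a); rewrite ?expfzMl ?IH.
Qed.

Lemma prod_square_gcd_expand (R : fieldType) n (F : nat -> R) : (0 < n)%N ->
  (forall k, (0 < k)%N -> F k != 0) ->
  \prod_(1 <= k < n.+1 | is_square (gcdn k n)) F k =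
  \prod_(c <- divisors n) (\prod_(1 <= j < (n %/ c).+1) F (c * j)%N) ^ liouville c.
Proof.
move=> n_gt0 F_neq0; rewrite big_mkcond /=.
transitivity (\prod_(1 <= k < n.+1) \prod_(c <- divisors n)
    (if (c %| k)%N then F k ^ liouville c else 1)).
  apply: eq_big_nat => k /andP[k_gt0 _].
  rewrite -big_mkcond /= prod_exprz ?F_neq0 // square_gcd_weight // /chi.
  by case: ifP => _; rewrite ?expr1z ?expr0z.
rewrite exchange_big; apply: eq_big_seq => c; rewrite -dvdn_divisors // => c_dvd_n.
by rewrite -big_mkcond big_multiples ?(dvdn_gt0 n_gt0 c_dvd_n) // exprz_prod.
Qed.

Lemma sum_first_nat (R : numFieldType) M :
  \sum_(1 <= j < M.+1) (j%:R : R) = M%:R * (M%:R + 1) / 2%:R.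
Proof.
elim: M => [|M IH]; first by rewrite big_geq // !mul0r.
rewrite big_nat_recr //= IH -[M.+1]addn1 !natrD.
by field.
Qed.

Lemma prod_multiples_nat c M :
  (\prod_(1 <= j < M.+1) (c * j) = c ^ M * M`!)%N.
Proof. by rewrite big_split /= prod_nat_const_nat subn1 fact_prod. Qed.

Lemma beta_flip n :
  (0 < n)%N -> beta n = \sum_(c <- divisors n) (n %/ c)%:Z * liouville c.
Proof.
move=> n_gt0; rewrite /beta (@big_divisors_flip _ _ _ n _ n_gt0).
by apply: eq_big_seq => c; rewrite -dvdn_divisors // => c_dvd_n; rewrite divnK_divisor.
Qed.

Lemma sum_square_gcd n : (0 < n)%N ->
  \sum_(1 <= k < n.+1 | is_square (gcdn k n)) (k%:R : rat)
    = (n%:R * ((beta n)%:~R + (chi n)%:~R)) / 2%:R.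
Proof.
move=> n_gt0; rewrite sum_square_gcd_expand //.
transitivity (\sum_(c <- divisors n)
    (liouville c)%:~R * (n%:R * ((n %/ c)%:R + 1) / 2%:R) : rat).
  apply: eq_big_seq => c; rewrite -dvdn_divisors // => c_dvd_n.
  have def_n : n = (c * (n %/ c))%N by rewrite mulnC divnK.
  under eq_bigr do rewrite natrM.
  by rewrite -mulr_sumr sum_first_nat {3}def_n natrM !mulrA.
rewrite -(liouville_divsum_chi _ n_gt0) /liouville_divsum beta_flip //.
rewrite !rmorph_sum /= -big_split /=.
rewrite mulr_sumr mulr_suml; apply: eq_bigr => c _.
by rewrite rmorphM /= pmulrn; ring.
Qed.

Lemma prod_square_gcd n : (0 < n)%N ->
  \prod_(1 <= k < n.+1 | is_square (gcdn k n)) (k%:R : rat)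
    = (n%:R : rat) ^ (beta n)
      * \prod_(d <- divisors n) ((d`!)%:R / (d ^ d)%N%:R) ^ (liouville (n %/ d)).
Proof.
move=> n_gt0; have natr_neq0 k : (0 < k)%N -> (k%:R : rat) != 0.
  by rewrite pnatr_eq0 -lt0n.
rewrite prod_square_gcd_expand //.
transitivity (\prod_(c <- divisors n)
    ((c%:R ^+ (n %/ c) * ((n %/ c)`!)%:R : rat) ^ liouville c)).
  apply: eq_big_seq => c _.
  by rewrite -natr_prod prod_multiples_nat natrM natrX.
rewrite beta_flip // -prod_exprz ?natr_neq0 //.
rewrite [X in _ = _ * X](@big_divisors_flip _ _ _ n _ n_gt0) -big_split /=.
apply: eq_big_seq => c; rewrite -dvdn_divisors // => c_dvd_n.
have c_gt0 : (0 < c)%N := dvdn_gt0 n_gt0 c_dvd_n.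
rewrite divnK_divisor // -exprz_exp -expfzMl; congr (_ ^ _).
have M_gt0 : (0 < n %/ c)%N by rewrite divn_gt0 // dvdn_leq.
have def_n : n = (c * (n %/ c))%N by rewrite mulnC divnK.
set M := (n %/ c)%N in M_gt0 def_n *.
rewrite -exprnP natrX def_n natrM exprMn.
by field; rewrite expf_neq0 ?natr_neq0.
Qed.

Theorem mainTheorem11 (n : nat) (hn : (1 <= n)%N) :
  (\sum_(1 <= k < n.+1 | is_square (gcdn k n)) (k%:R : rat)
     = (n%:R * ((beta n)%:~R + (chi n)%:~R)) / 2%:R)
  /\
  (\prod_(1 <= k < n.+1 | is_square (gcdn k n)) (k%:R : rat)
     = (n%:R : rat) ^ (beta n)
       * \prod_(d <- divisors n)
           ((d`!)%:R / (d ^ d)%N%:R) ^ (liouville (n %/ d))).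
Proof. by split; [apply: sum_square_gcd | apply: prod_square_gcd]. Qed.
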